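(* Let $R$ be a commutative ring and let $C^i_{jk}\in R$ ($1\le i,j,k\le n$) satisfy $C^i_{jk}=-C^i_{kj}$ and $\sum_\alpha\bigl(C^\alpha_{ij}C^l_{\alpha k}+C^\alpha_{jk}C^l_{\alpha i}+C^\alpha_{ki}C^l_{\alpha j}\bigr)=0$ for all $i,j,k,l$. In the polynomial ring $R[\partial^1,\dots,\partial^n]$ let $\mathbf C^i_j:=\sum_k C^i_{jk}\partial^k$ and let $\delta_\rho$ denote the partial derivative with respect to $\partial^\rho$. Then for every $L\ge0$ and all $1\le\mu,\nu,\gamma\le n$: $$\sum_{\rho,\sigma}\Bigl(\mathbf C^\rho_\nu C^\sigma_{\mu\rho}(\mathbf C^L)^\gamma_\sigma-\mathbf C^\rho_\mu C^\sigma_{\nu\rho}(\mathbf C^L)^\gamma_\sigma\Bigr)=\sum_\sigma C^\sigma_{\mu\nu}(\mathbf C^{L+1})^\gamma_\sigma,$$ $$\sum_\rho\Bigl(C^\gamma_{\mu\rho}(\mathbf C^L)^\rho_\nu+\mathbf C^\rho_\nu\,\delta_\rho\bigl((\mathbf C^L)^\gamma_\mu\bigr)-C^\gamma_{\nu\rho}(\mathbf C^L)^\rho_\mu-\mathbf C^\rho_\mu\,\delta_\rho\bigl((\mathbf C^L)^\gamma_\nu\bigr)\Bigr)=2\sum_\sigma C^\sigma_{\mu\nu}(\mathbf C^L)^\gamma_\sigma.$$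
   Context: $\mathbf C^L$ is the $L$-th matrix power of the matrix $(\mathbf C^i_j)$ with entries in $R[\partial^1,\dots,\partial^n]$, $\mathbf C^0$ the identity matrix. *)

From HB Require Import structures.
From mathcomp Require Import all_boot all_order all_algebra.
From mathcomp Require Import mpoly.
Set Implicit Arguments. Unset Strict Implicit. Unset Printing Implicit Defensive.
Import GRing.Theory.
Local Open Scope ring_scope.

(* Structure constants C i j k = C^i_{jk}, indices in 'I_n (i.e. 1..n shifted to 0..n-1).
   The variable 'X_k of {mpoly R[n]} plays the role of \partial^k. *)

Definition bCmx (R : comRingType) (n : nat) (C : 'I_n -> 'I_n -> 'I_n -> R)
  : 'M[{mpoly R[n]}]_n :=
  \matrix_(i, j) \sum_(k < n) (C i j k)%:MP * 'X_k.

Definition mxpow (T : pzRingType) (n : nat) (A : 'M[T]_n) (L : nat) : 'M[T]_n :=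
  iter L (fun B => A *m B) 1%:M.

From HB Require Import structures.
From mathcomp Require Import all_boot all_order all_algebra.
From mathcomp Require Import mpoly ring.
Import GRing.Theory.
Local Open Scope ring_scope.

(* Antisymmetry and the Jacobi identity give the exchange rule
     sum_rho (C^g_{mu rho} bC^rho_x - bC^rho_mu C^g_{x rho}) = sum_rho bC^g_rho C^rho_{mu x},
   a form of the Jacobi identity that is linear in the partials.  The first identity is this
   rule contracted with (bC^L)^g_sig, since bC^(L+1) = bC^L bC.  For the second, call its left
   side [curl mu nu (bC^L) g]; the Leibniz rule for the partial derivatives together with the
   exchange rule give curl(bC Q)^g = sum_r bC^g_r curl(Q)^r for every matrix Q, and the right
   side transforms the same way, so induction on L reduces to L = 0, which is antisymmetry. *)

Lemma mderiv_mpolyX (R : comRingType) n (i k : 'I_n) :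
  mderiv i ('X_k : {mpoly R[n]}) = (i == k)%:R.
Proof.
rewrite mderivX mnm1E; have [->|_] := eqVneq k i; last by rewrite scale0r.
by have := addmK U_(i) 0%MM; rewrite add0m => ->; rewrite mpolyX0 scale1r.
Qed.

Lemma mxpowSr (T : pzRingType) n (A : 'M[T]_n) L :
  mxpow A L.+1 = mxpow A L *m A.
Proof.
elim: L => [|L IH]; first by rewrite /mxpow /= mulmx1 mul1mx.
by rewrite [LHS]/mxpow iterS -/(mxpow A L.+1) {1}IH mulmxA.
Qed.

Lemma sum_mul_mx1_col (T : pzRingType) n (f : 'I_n -> T) j :
  \sum_i f i * (1%:M : 'M[T]_n) i j = f j.
Proof.
rewrite (bigD1 j) //= mxE eqxx mulr1 big1 ?addr0 // => i /negbTE ij.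
by rewrite mxE ij mulr0.
Qed.

Lemma sum_mul_mx1_row (T : pzRingType) n (f : 'I_n -> T) i :
  \sum_j f j * (1%:M : 'M[T]_n) i j = f i.
Proof.
rewrite (bigD1 i) //= mxE eqxx mulr1 big1 ?addr0 // => j /negbTE ji.
by rewrite mxE eq_sym ji mulr0.
Qed.

Section StructureConstants.
Variables (R : comRingType) (n : nat) (C : 'I_n -> 'I_n -> 'I_n -> R).
Local Notation bC := (bCmx C).
Local Notation Cp i j k := ((C i j k)%:MP : {mpoly R[n]}).

Lemma mderiv_bCmx i j r : mderiv r (bC i j) = Cp i j r.
Proof.
rewrite mxE raddf_sum (bigD1 r) //= big1 ?addr0.
  by rewrite mderiv_mulC mderiv_mpolyX eqxx mulr1.
by move=> k /negbTE kr; rewrite mderiv_mulC mderiv_mpolyX eq_sym kr mulr0.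
Qed.

Lemma mderiv_bCmx_mul (Q : 'M_n) r i j :
  mderiv r ((bC *m Q) i j) = \sum_t (Cp i t r * Q t j + bC i t * mderiv r (Q t j)).
Proof.
by rewrite mxE raddf_sum; apply: eq_bigr => t _; rewrite /= mderivM mderiv_bCmx.
Qed.

Hypothesis C_anti : forall i j k, C i j k = - C i k j.
Hypothesis C_jacobi : forall i j k l,
  \sum_(a < n) (C a i j * C l a k + C a j k * C l a i + C a k i * C l a j) = 0.

Lemma jacobi_contract mu x g k :
  \sum_r (C g mu r * C r x k - C r mu k * C g x r) = \sum_r C r mu x * C g r k.
Proof.
apply/eqP; rewrite -subr_eq0 -sumrB -oppr_eq0 -sumrN -[X in _ == X](C_jacobi mu x k g).
apply/eqP/eq_bigr => r _.
rewrite (C_anti g mu r) (C_anti r mu k) (C_anti g x r); ring.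
Qed.

Lemma bCmx_jacobi mu x g :
  \sum_r (Cp g mu r * bC r x - bC r mu * Cp g x r) = \sum_r bC g r * Cp r mu x.
Proof.
have expand (f : 'I_n -> 'I_n -> R) :
    \sum_r \sum_k (f r k)%:MP * 'X_k = \sum_k (\sum_r f r k)%:MP * 'X_k :> {mpoly R[n]}.
  by rewrite exchange_big; apply: eq_bigr => k _; rewrite raddf_sum mulr_suml.
transitivity (\sum_r \sum_k
    ((C g mu r * C r x k - C r mu k * C g x r)%:MP * 'X_k : {mpoly R[n]})).
  apply: eq_bigr => r _; rewrite !mxE mulr_sumr mulr_suml -sumrB.
  by apply: eq_bigr => k _; rewrite mpolyCB !mpolyCM; ring.
transitivity (\sum_r \sum_k ((C r mu x * C g r k)%:MP * 'X_k : {mpoly R[n]})).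
  by rewrite !expand; apply: eq_bigr => k _; rewrite jacobi_contract.
apply: eq_bigr => r _; rewrite !mxE mulr_suml.
by apply: eq_bigr => k _; rewrite !mpolyCM; ring.
Qed.

Lemma bCmx_bracket_mul (Q : 'M_n) mu nu ga :
  \sum_rho \sum_sig (bC rho nu * Cp sig mu rho * Q ga sig
                     - bC rho mu * Cp sig nu rho * Q ga sig)
  = \sum_sig Cp sig mu nu * (Q *m bC) ga sig.
Proof.
transitivity (\sum_s (\sum_r (Cp s mu r * bC r nu - bC r mu * Cp s nu r)) * Q ga s).
  rewrite exchange_big; apply: eq_bigr => s _; rewrite mulr_suml.
  by apply: eq_bigr => r _; ring.
under eq_bigr => s _ do rewrite bCmx_jacobi mulr_suml.
under [RHS]eq_bigr => s _ do rewrite mxE mulr_sumr.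
rewrite exchange_big; apply: eq_bigr => s _; apply: eq_bigr => t _; ring.
Qed.

Definition curl mu nu (Q : 'M[{mpoly R[n]}]_n) ga :=
  \sum_rho (Cp ga mu rho * Q rho nu + bC rho nu * mderiv rho (Q ga mu)
            - Cp ga nu rho * Q rho mu - bC rho mu * mderiv rho (Q ga nu)).

Lemma curl_mx1 mu nu ga : curl mu nu 1%:M ga = 2%:R * Cp ga mu nu.
Proof.
have d1 i j r : mderiv r ((1%:M : 'M[{mpoly R[n]}]_n) i j) = 0.
  by rewrite mxE mderivMn -mpolyC1 mderivC mul0rn.
rewrite /curl sumrB sumrB big_split /= !sum_mul_mx1_col.
rewrite !big1 => [|r _|r _]; rewrite ?d1 ?mulr0 //.
by rewrite (C_anti ga nu mu) mpolyCN; ring.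
Qed.

Lemma curl_mulmx mu nu (Q : 'M_n) ga :
  curl mu nu (bC *m Q) ga = \sum_r bC ga r * curl mu nu Q r.
Proof.
have mulE i j : (bC *m Q) i j = \sum_t bC i t * Q t j by rewrite mxE.
pose D t := \sum_rho (bC rho nu * mderiv rho (Q t mu) - bC rho mu * mderiv rho (Q t nu)).
have curlE r : curl mu nu Q r =
    \sum_rho Cp r mu rho * Q rho nu - \sum_rho Cp r nu rho * Q rho mu + D r.
  by rewrite /curl /D -sumrB -big_split /=; apply: eq_bigr => rho _; ring.
have expand : curl mu nu (bC *m Q) ga =
      \sum_t (\sum_rho (Cp ga mu rho * bC rho t - bC rho mu * Cp ga t rho)) * Q t nu
    - \sum_t (\sum_rho (Cp ga nu rho * bC rho t - bC rho nu * Cp ga t rho)) * Q t mu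
    + \sum_t bC ga t * D t.
  rewrite /curl -sumrB -big_split.
  under [LHS]eq_bigr => rho _ do
    rewrite !mderiv_bCmx_mul !mulE !mulr_sumr -big_split -!sumrB.
  rewrite exchange_big; apply: eq_bigr => t _.
  rewrite /D !mulr_suml mulr_sumr -sumrB -big_split /=.
  by apply: eq_bigr => rho _; ring.
have regroup x y : \sum_t (\sum_r bC ga r * Cp r x t) * Q t y
                 = \sum_r bC ga r * \sum_t Cp r x t * Q t y.
  under eq_bigr => t _ do rewrite mulr_suml.
  rewrite exchange_big; apply: eq_bigr => r _; rewrite mulr_sumr.
  by apply: eq_bigr => t _; ring.
rewrite expand.
under eq_bigr => t _ do rewrite bCmx_jacobi.
under [X in _ - X + _]eq_bigr => t _ do rewrite bCmx_jacobi.
rewrite !regroup -sumrB -big_split /=; apply: eq_bigr => r _.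
by rewrite curlE; ring.
Qed.

Lemma curl_mxpow mu nu L ga :
  curl mu nu (mxpow bC L) ga = 2%:R * \sum_sig Cp sig mu nu * mxpow bC L ga sig.
Proof.
elim: L ga => [|L IH] ga; first by rewrite curl_mx1 sum_mul_mx1_row.
rewrite [mxpow _ _]/mxpow iterS -/(mxpow bC L) curl_mulmx.
under eq_bigr => r _ do rewrite IH.
rewrite mulr_sumr; under [RHS]eq_bigr => s _ do rewrite mxE !mulr_sumr.
rewrite [RHS]exchange_big; apply: eq_bigr => r _.
by rewrite !mulr_sumr; apply: eq_bigr => s _; ring.
Qed.

End StructureConstants.

Theorem mainTheorem2 (R : comRingType) (n : nat) (C : 'I_n -> 'I_n -> 'I_n -> R)
  (Hanti : forall i j k, C i j k = - C i k j)
  (Hjac : forall i j k l,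
     \sum_(a < n) (C a i j * C l a k + C a j k * C l a i + C a k i * C l a j) = 0) :
  forall (L : nat) (mu nu ga : 'I_n),
    (\sum_(rho < n) \sum_(sig < n)
        (bCmx C rho nu * (C sig mu rho)%:MP * mxpow (bCmx C) L ga sig
         - bCmx C rho mu * (C sig nu rho)%:MP * mxpow (bCmx C) L ga sig)
     = \sum_(sig < n) (C sig mu nu)%:MP * mxpow (bCmx C) L.+1 ga sig)
    /\
    (\sum_(rho < n)
        ((C ga mu rho)%:MP * mxpow (bCmx C) L rho nu
         + bCmx C rho nu * mderiv rho (mxpow (bCmx C) L ga mu)
         - (C ga nu rho)%:MP * mxpow (bCmx C) L rho mu
         - bCmx C rho mu * mderiv rho (mxpow (bCmx C) L ga nu))
     = 2%:R * \sum_(sig < n) (C sig mu nu)%:MP * mxpow (bCmx C) L ga sig).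
Proof.
move=> L mu nu ga; split.
  by rewrite mxpowSr; apply: bCmx_bracket_mul.
exact: curl_mxpow.
Qed.
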